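(* There is an absolute constant $C>0$ such that the following holds. Let $d$ and $n$ be integers with $1\le d\le n$, let $E$ be a nonempty family of subsets of $[n]$ each of size at most $d$, and let $p$ be an integer with $1\le p\le \min\{|e'\setminus e| : e,e'\in E,\ e\neq e'\}$. Then there exists a non-adaptive group testing algorithm that finds the defective hyperedge in $E$ and uses at most $C\,\frac{d}{p}\log|E|$ tests; that is, there are pools $T_1,\dots,T_t\subseteq[n]$ with $t\le C\frac dp\log|E|$ such that $r(e)\neq r(e')$ for all distinct $e,e'\in E$.
   Context: Group testing on a hypergraph: the items are $[n]=\{1,\dots,n\}$, $E$ is a family of subsets of $[n]$ (hyperedges), and exactly one hyperedge $e^*\in E$ is defective (unknown). A test on a pool $T\subseteq[n]$ is positive iff $T\cap e^*\neq\emptyset$. A non-adaptive algorithm with $t$ tests is a sequence of pools $T_1,\dots,T_t\subseteq[n]$ fixed in advance; for $f\in E$ its response vector is $r(f)\in\{0,1\}^t$ with $i$-th entry $1$ iff $T_i\cap f\neq\emptyset$. The algorithm finds the defective hyperedge iff distinct hyperedges have distinct response vectors. Logarithms are to a fixed base. *)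

From mathcomp Require Import all_boot.
From Stdlib Require Import Reals.
Set Implicit Arguments. Unset Strict Implicit. Unset Printing Implicit Defensive.

(* Items are 'I_n (i.e. {0,...,n-1}, in bijection with [n]).
   A non-adaptive algorithm with t tests: pools T : 'I_t -> {set 'I_n}. *)
Definition response (n t : nat) (T : 'I_t -> {set 'I_n}) (f : {set 'I_n})
  : {ffun 'I_t -> bool} := [ffun i => T i :&: f != set0].

Definition finds_defective (n t : nat) (T : 'I_t -> {set 'I_n})
  (E : {set {set 'I_n}}) : Prop :=
  forall e e', e \in E -> e' \in E -> e != e' -> response T e != response T e'.

(* A random test is the zero set of a uniformly random map h : [n] -> {0, ..., 4d-1}.
   For distinct e, e' and x in e' \ e, the event "x is the only zero of h on e ∪ e'"
   has probability at least 1/(8d) and makes the test meet e' but not e; these events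
   are disjoint for different x, so the pair is separated with probability at least
   p/(8d).  Choosing greedily, at each step, a test separating a p/(8d) fraction of the
   pairs still unseparated leaves at most (1 - p/(8d))^t |E|^2 < 1 pairs once
   t > 16 (d/p) ln |E|. *)

From Stdlib Require Import Reals Lra Lia ZArith.
From mathcomp Require Import all_boot zify.
Set Implicit Arguments. Unset Strict Implicit. Unset Printing Implicit Defensive.

Lemma expn_subn_mul_le m s : s <= m -> m ^ s * (m - s) <= m * m.-1 ^ s.
Proof.
elim: s => [|s IH] le_sm; first by rewrite !expn0 subn0 mul1n muln1.
have IH1 := leq_mul (IH (ltnW le_sm)) (leqnn m.-1).
have step : m * (m - s.+1) <= (m - s) * m.-1 by nia.
have IH2 := leq_mul (leqnn (m ^ s)) step.
rewrite !expnS; nia.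
Qed.

Lemma expn_le_double_pred m s : 2 * s <= m -> m ^ s <= 2 * m.-1 ^ s.
Proof.
case: m => [|m] le_sm; first by have -> : s = 0 by lia.
have s_le : s <= m.+1 by lia.
have le_pow := expn_subn_mul_le s_le.
rewrite -(leq_pmul2r (ltn0Sn m)); nia.
Qed.

Lemma card_preimset_fibers (aT rT : finType) (f : aT -> rT) (A : {set rT}) :
  #|f @^-1: A| = \sum_(y in A) #|[set x | f x == y]|.
Proof.
rewrite -sum1_card (partition_big f (mem A)) => [|x]; last by rewrite inE.
apply: eq_bigr => y yA; rewrite -sum1_card; apply: eq_bigl => x.
by rewrite !inE; have [->|_] := eqVneq (f x) y; rewrite ?andbT ?andbF.
Qed.

Definition separates n (T e e' : {set 'I_n}) : bool :=
  (T :&: e != set0) != (T :&: e' != set0).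

Lemma separates_of_meet_set1 n (T e e' : {set 'I_n}) x :
  x \in e' :\: e -> T :&: (e :|: e') = [set x] -> separates T e e'.
Proof.
rewrite inE => /andP[xNe xe'] meet1.
have xT : x \in T by have := set11 x; rewrite -meet1 inE => /andP[].
rewrite /separates; have -> : T :&: e = set0.
  apply/setP => i; rewrite !inE; apply/negbTE/andP => -[iT ie].
  have : i \in T :&: (e :|: e') by rewrite !inE iT ie.
  by rewrite meet1 inE => /eqP iEx; rewrite -iEx ie in xNe.
suff -> : T :&: e' != set0 by rewrite eqxx.
by apply/set0Pn; exists x; rewrite inE xT xe'.
Qed.

Section RandomHashTests.
Variables n k : nat.
Implicit Types (S : {set 'I_n}) (h : {ffun 'I_n -> 'I_k.+1}).

Definition zero_set h : {set 'I_n} := [set i | h i == ord0].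

Definition lone_zero_fiber S (x i : 'I_n) : {set 'I_k.+1} :=
  if i == x then [set ord0] else if i \in S then [set~ ord0] else setT.

Lemma lone_zero_setXn S x : x \in S ->
  [set h | zero_set h :&: S == [set x]] = setXn (lone_zero_fiber S x).
Proof.
move=> xS; apply/setP => h; rewrite in_setXn inE /lone_zero_fiber.
apply/eqP/forallP => [meet1 i | fiber].
  have iS_zero : i \in S -> h i == ord0 -> i = x.
    by move=> iS hi0; apply/set1P; rewrite -meet1 !inE hi0.
  case: eqP => [-> | ne_ix].
    by have := set11 x; rewrite -meet1 !inE => /andP[/eqP ->].
  case: ifP => iS; last by rewrite inE.
  by rewrite !inE; apply/eqP => hi0; apply: ne_ix; apply: iS_zero => //; apply/eqP.
apply/setP => i; rewrite !inE; have := fiber i.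
case: eqP => [-> | ne_ix]; first by rewrite xS inE => ->.
by case: (i \in S); rewrite ?inE ?andbF // => /negbTE ->.
Qed.

Lemma leq_card_lone_zero S x : x \in S -> 2 * #|S| <= k.+1 ->
  k.+1 ^ n <= 2 * k.+1 * #|[set h | zero_set h :&: S == [set x]]|.
Proof.
move=> xS small_S; rewrite lone_zero_setXn // cardsXn.
have -> : k.+1 ^ n = \prod_(i : 'I_n) k.+1 by rewrite prod_nat_const card_ord.
rewrite (bigD1 x) //= [X in _ <= _ * X](bigD1 x) //=.
have -> : #|lone_zero_fiber S x x| = 1 by rewrite /lone_zero_fiber eqxx cards1.
rewrite mul1n -mulnA mulnCA leq_pmul2l //.
rewrite (bigID (mem S)) [X in _ <= _ * X](bigID (mem S)) /=.
rewrite [X in _ <= _ * (_ * X)](eq_bigr (fun _ => k.+1)); last first.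
  by move=> i /andP[/negbTE ne_ix /negbTE iNS]; rewrite /lone_zero_fiber ne_ix iNS cardsT card_ord.
rewrite [X in _ <= _ * (X * _)](eq_bigr (fun _ => k)); last first.
  by move=> i /andP[/negbTE ne_ix iS]; rewrite /lone_zero_fiber ne_ix iS cardsC1 card_ord.
rewrite mulnA leq_pmul2r ?prod_nat_const ?expn_gt0 //.
apply: expn_le_double_pred; apply: leq_trans small_S; rewrite leq_mul2l /=.
by apply: subset_leq_card; apply/subsetP => i; rewrite unfold_in => /andP[].
Qed.

Lemma leq_card_separating (e e' : {set 'I_n}) : 2 * #|e :|: e'| <= k.+1 ->
  #|e' :\: e| * k.+1 ^ n <= 2 * k.+1 * #|[set h | separates (zero_set h) e e']|.
Proof.
set S := e :|: e' => small_S.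
pose meet h := zero_set h :&: S.
have lone_sep : meet @^-1: (set1 @: (e' :\: e)) \subset [set h | separates (zero_set h) e e'].
  apply/subsetP => h; rewrite !inE => /imsetP[x xD meet_x].
  exact: separates_of_meet_set1 xD meet_x.
apply: leq_trans (leq_mul (leqnn _) (subset_leq_card lone_sep)).
rewrite card_preimset_fibers big_imset /=; last by move=> x y _ _; apply: set1_inj.
rewrite -sum_nat_const big_distrr /=; apply: leq_sum => x.
rewrite inE => /andP[_ xe']; apply: leq_card_lone_zero => //.
by rewrite inE xe' orbT.
Qed.

End RandomHashTests.

Lemma card_set_nat_sum (T : finType) (b : pred T) : #|[set x | b x]| = \sum_x b x.
Proof. by rewrite -sum1_card big_mkcond; apply: eq_bigr => x _; rewrite inE; case: (b x). Qed.

Section GreedyCover.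
Variables (H Q : finType) (r : H -> Q -> bool) (p c : nat).
Hypothesis H_gt0 : 0 < #|H|.

Definition often_hit (P : {set Q}) :=
  forall q, q \in P -> p * #|H| <= c * #|[set h | r h q]|.

Lemma exists_test_hitting_fraction P : often_hit P ->
  exists h, p * #|P| <= c * #|P :&: [set q | r h q]|.
Proof.
move=> dense; have [h0 max_h0] := eq_bigmax (fun h => #|P :&: [set q | r h q]|) H_gt0.
exists h0; rewrite -(leq_pmul2l H_gt0).
have double_count :
    \sum_h #|P :&: [set q | r h q]| = \sum_(q in P) #|[set h | r h q]|.
  transitivity (\sum_h \sum_q ((q \in P) && r h q : nat)).
    by apply: eq_bigr => h _; rewrite -card_set_nat_sum; apply: eq_card => q; rewrite !inE.
  rewrite exchange_big [RHS]big_mkcond; apply: eq_bigr => q _.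
  by case: (q \in P); rewrite /= ?card_set_nat_sum // big1.
have sum_le_max : \sum_h #|P :&: [set q | r h q]| <= #|H| * #|P :&: [set q | r h0 q]|.
  by rewrite -max_h0 -sum_nat_const; apply: leq_sum => h _; apply: leq_bigmax.
have sum_ge : #|P| * (p * #|H|) <= c * \sum_(q in P) #|[set h | r h q]|.
  by rewrite -sum_nat_const big_distrr leq_sum.
rewrite -double_count in sum_ge; nia.
Qed.

Lemma exists_tests_few_unhit P t : often_hit P ->
  exists s : t.-tuple H, c ^ t * #|[set q in P | ~~ has (r^~ q) s]| <= (c - p) ^ t * #|P|.
Proof.
move=> dense; elim: t => [|t [s left_s]].
  exists [tuple]; rewrite !mul1n; apply: subset_leq_card.
  by apply/subsetP => q; rewrite inE => /andP[].
set U := [set q in P | _] in left_s.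
have [h dense_h] : exists h, p * #|U| <= c * #|U :&: [set q | r h q]|.
  by apply: exists_test_hitting_fraction => q; rewrite inE => /andP[/dense].
exists [tuple of h :: s].
have -> : [set q in P | ~~ has (r^~ q) [tuple of h :: s]] = U :\: [set q | r h q].
  by apply/setP => q; rewrite !inE /= negb_or andbCA.
have split_U := cardsID [set q | r h q] U.
have shrink : c * #|U :\: [set q | r h q]| <= (c - p) * #|U| by nia.
rewrite !expnS -!mulnA mulnCA.
apply: leq_trans (leq_mul (leqnn _) shrink) _.
by rewrite mulnCA leq_mul2l left_s orbT.
Qed.

End GreedyCover.

Lemma finds_defective_card_le1 n t (T : 'I_t -> {set 'I_n}) (E : {set {set 'I_n}}) :
  #|E| <= 1 -> finds_defective T E.
Proof. by move=> /card_le1_eqP E_le1 e e' eE e'E; rewrite (E_le1 e e' eE e'E) eqxx. Qed.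

Lemma exists_separating_tests n d p t (E : {set {set 'I_n}}) :
  0 < d -> (forall e, e \in E -> #|e| <= d) ->
  (forall e e', e \in E -> e' \in E -> e != e' -> p <= #|e' :\: e|) ->
  (8 * d - p) ^ t * (#|E| * #|E|) < (8 * d) ^ t ->
  exists T : 'I_t -> {set 'I_n}, finds_defective T E.
Proof.
move=> d_gt0 size_le sep_ge few_failures.
pose k := (4 * d).-1; have k_def : k.+1 = 4 * d by rewrite prednK ?muln_gt0.
pose pairs := [set q : {set 'I_n} * {set 'I_n} | [&& q.1 \in E, q.2 \in E & q.1 != q.2]].
pose r (h : {ffun 'I_n -> 'I_k.+1}) q := separates (zero_set h) q.1 q.2.
have dense : often_hit r p (8 * d) pairs.
  case=> e e'; rewrite inE => /and3P[/= eE e'E ne]; rewrite card_ffun !card_ord.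
  have small : 2 * #|e :|: e'| <= k.+1.
    by have := cardsU e e'; have := size_le _ eE; have := size_le _ e'E; lia.
  apply: leq_trans (_ : #|e' :\: e| * k.+1 ^ n <= _).
    by rewrite leq_mul2r sep_ge ?orbT.
  have -> : 8 * d = 2 * k.+1 by rewrite k_def mulnA.
  exact: leq_card_separating small.
have hashes_gt0 : 0 < #|{ffun 'I_n -> 'I_k.+1}| by rewrite card_ffun !card_ord expn_gt0.
have [s few_left] := exists_tests_few_unhit hashes_gt0 t dense.
have none_left : [set q in pairs | ~~ has (r^~ q) s] = set0.
  apply/cards0_eq/eqP; rewrite -leqn0 -ltnS -(ltn_pmul2l (leq_ltn_trans (leq0n _) few_failures)).
  apply: leq_ltn_trans few_left _; rewrite muln1; apply: leq_ltn_trans few_failures.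
  rewrite leq_mul2l -cardsX subset_leq_card ?orbT //.
  by apply/subsetP => -[e e']; rewrite !inE => /and3P[-> -> _].
exists (fun i => zero_set (tnth s i)) => e e' eE e'E ne.
have : (e, e') \notin [set q in pairs | ~~ has (r^~ q) s] by rewrite none_left inE.
rewrite !inE /= eE e'E ne negbK => /hasP[h /tnthP[i ->] sep_i].
by apply/eqP => /ffunP/(_ i); rewrite !ffunE; apply/eqP.
Qed.

Section DecayExponent.
Local Open Scope R_scope.

Lemma INR_expn m t : INR (m ^ t)%N = INR m ^ t.
Proof. by elim: t => [|t IH] //; rewrite expnS -multE mult_INR IH. Qed.

Lemma one_sub_pow_le_exp x t : 0 <= x <= 1 -> (1 - x) ^ t <= exp (- (x * INR t)).
Proof.
move=> x01; apply: Rle_trans (pow_incr (1 - x) (exp (- x)) t _) _.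
  by split; [lra | have := exp_ineq1_le (- x); lra].
rewrite -Rpower_pow; last exact: exp_pos.
rewrite /Rpower ln_exp; apply: Req_le; congr exp; ring.
Qed.

Lemma archimed_nat x : 0 <= x -> exists t : nat, x < INR t <= x + 1.
Proof.
move=> x_ge0; have [up_gt up_le] := archimed x.
have up_ge0 : (0 <= up x)%Z by apply: le_IZR; lra.
exists (Z.to_nat (up x)); rewrite INR_IZR_INZ Z2Nat.id //; lra.
Qed.

Lemma exists_decay_exponent (c p N : nat) : (0 < p)%N -> (p <= c)%N -> (2 <= N)%N ->
  exists t, ((c - p) ^ t * (N * N) < c ^ t)%N /\
    INR t <= 2 * (INR c / INR p) * ln (INR N) + 1.
Proof.
move=> /ltP p_gt0 /leP p_le_c /leP N_ge2.
have p_pos : 0 < INR p by apply: lt_0_INR.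
have c_ge_p : INR p <= INR c by apply: le_INR.
have N_ge2R : 2 <= INR N by apply: (le_INR 2).
have lnN_pos : 0 < ln (INR N) by rewrite -ln_1; apply: ln_increasing; lra.
set x := 2 * (INR c / INR p) * ln (INR N).
have x_pos : 0 < x.
  by apply: Rmult_lt_0_compat => //; apply: Rmult_lt_0_compat; [lra | apply: Rdiv_lt_0_compat; lra].
have [t [x_lt_t t_le]] := archimed_nat (Rlt_le _ _ x_pos).
exists t; split; last by [].
apply/ltP/INR_lt; rewrite -!multE !mult_INR !INR_expn subnE minus_INR //.
set rate := INR p / INR c.
have rate01 : 0 <= rate <= 1.
  have rate_c : rate * INR c = INR p by rewrite /rate; field; lra.
  split; nra.
have -> : INR c - INR p = INR c * (1 - rate) by rewrite /rate; field; lra.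
rewrite Rpow_mult_distr.
have ct_pos : 0 < INR c ^ t by apply: pow_lt; lra.
have rate_t : 2 * ln (INR N) < rate * INR t.
  apply: (Rmult_lt_reg_l (INR c / INR p)); first by apply: Rdiv_lt_0_compat; lra.
  have -> : INR c / INR p * (rate * INR t) = INR t by rewrite /rate; field; lra.
  by have -> : INR c / INR p * (2 * ln (INR N)) = x by rewrite /x; ring.
have N2 : exp (- (2 * ln (INR N))) * (INR N * INR N) = 1.
  rewrite exp_Ropp (_ : 2 * ln (INR N) = ln (INR N) + ln (INR N)); last by ring.
  rewrite exp_plus exp_ln; [field|]; lra.
have decay : (1 - rate) ^ t * (INR N * INR N) < 1.
  have pow_le := one_sub_pow_le_exp t rate01.
  have exp_lt : exp (- (rate * INR t)) < exp (- (2 * ln (INR N))) by apply: exp_increasing; lra.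
  have N2_pos : 0 < INR N * INR N by nra.
  rewrite -[X in _ < X]N2; apply: Rle_lt_trans (Rmult_lt_compat_r _ _ _ N2_pos exp_lt).
  exact: Rmult_le_compat_r (Rlt_le _ _ N2_pos) pow_le.
nra.
Qed.

Lemma le_const_ratio_ln (d p N : nat) (y : R) : (0 < p)%N -> (p <= d)%N -> (2 <= N)%N ->
  y <= 2 * (INR (8 * d) / INR p) * ln (INR N) + 1 -> y <= 18 * (INR d / INR p) * ln (INR N).
Proof.
move=> /ltP p_gt0 /leP p_le_d /leP N_ge2 y_le; apply: Rle_trans y_le _.
have p_pos : 0 < INR p by apply: lt_0_INR.
have ratio_ge1 : 1 <= INR d / INR p.
  by apply: (Rmult_le_reg_r (INR p)) => //; rewrite Rmult_1_l; field_simplify; [apply: le_INR | lra].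
have lnN_gt : / 2 < ln (INR N).
  have [N_gt2 | <-] := Rle_lt_or_eq_dec 2 (INR N) (le_INR 2 N N_ge2); last exact: ln_lt_2.
  by apply: Rlt_trans ln_lt_2 (ln_increasing _ _ _ N_gt2); lra.
rewrite -multE mult_INR (_ : INR 8 = 8) /Rdiv; last by rewrite /=; ring.
rewrite /Rdiv in ratio_ge1; nra.
Qed.

End DecayExponent.

Lemma diff_lbound_le_size_ubound n d p (E : {set {set 'I_n}}) : 1 < #|E| ->
  (forall e, e \in E -> #|e| <= d) ->
  (forall e e', e \in E -> e' \in E -> e != e' -> p <= #|e' :\: e|) -> p <= d.
Proof.
case/card_gt1P => e [e' [eE e'E ne]] size_le sep_ge.
apply: leq_trans (sep_ge _ _ eE e'E ne) (leq_trans _ (size_le _ e'E)).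
exact/subset_leq_card/subsetDl.
Qed.

Theorem corollary1 :
  exists C : R, Rlt 0 C /\
  forall (d n : nat) (E : {set {set 'I_n}}) (p : nat),
    (1 <= d)%N -> (d <= n)%N ->
    E != set0 ->
    (forall e, e \in E -> (#|e| <= d)%N) ->
    (1 <= p)%N ->
    (forall e e', e \in E -> e' \in E -> e != e' -> (p <= #|e' :\: e|)%N) ->
    exists (t : nat) (T : 'I_t -> {set 'I_n}),
      Rle (INR t) (Rmult (Rmult C (Rdiv (INR d) (INR p))) (ln (INR #|E|))) /\
      finds_defective T E.
Proof.
exists (IZR 18); split => [|d n E p d_gt0 _ E_neq0 size_le p_gt0 sep_ge]; first lra.
have [E_le1 | E_gt1] := leqP #|E| 1.
  exists 0%N, (fun _ => set0); split; last exact: finds_defective_card_le1.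
  have -> : #|E| = 1%N by apply/eqP; rewrite eqn_leq E_le1 card_gt0.
  by rewrite ln_1 Rmult_0_r; apply: Rle_refl.
have p_le_d := diff_lbound_le_size_ubound E_gt1 size_le sep_ge.
have [t [few_failures t_le]] :=
  exists_decay_exponent p_gt0 (leq_trans p_le_d (leq_pmull d (ltn0Sn 7))) E_gt1.
have [T found] := exists_separating_tests d_gt0 size_le sep_ge few_failures.
by exists t, T; split; first exact: le_const_ratio_ln t_le.
Qed.
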